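(* Let $t\geqslant 2$ be an integer, let $r\in\{2t,2t+1\}$, and set $\ell^*=5$ if $r=2t$ and $\ell^*=7$ if $r=2t+1$. Then for every $n\geqslant 2r-1$, $$I(n,2r-1,r)\geqslant 2\binom{2t-3}{t}+\ell^*\binom{2t-2}{t-1}.$$ Moreover, for every $n\geqslant 2r$, $$N(n,2r-1,r)=I(n,2r-1,r)\geqslant N(n,2r,r),$$ and consequently $N(n,2r-1,r)\geqslant 2\binom{2t-3}{t}+\ell^*\binom{2t-2}{t-1}$.
   Context: $\mathrm{Sym}_n$ is the symmetric group of permutations of $[n]=\{1,\dots,n\}$. The Hamming distance between $\pi,\tau\in\mathrm{Sym}_n$ is $d(\pi,\tau)=|\{i\in[n]:\pi(i)\neq\tau(i)\}|$, and $B_r(\pi)=\{\tau\in\mathrm{Sym}_n: d(\pi,\tau)\leqslant r\}$. For integers $d,r$, $I(n,d,r)=\max_{\pi,\tau\in\mathrm{Sym}_n,\ d(\pi,\tau)=d}|B_r(\pi)\cap B_r(\tau)|$ and $N(n,d,r)=\max_{\pi,\tau\in\mathrm{Sym}_n,\ d(\pi,\tau)\geqslant d}|B_r(\pi)\cap B_r(\tau)|$. Binomial convention: $\binom{0}{0}=1$ and $\binom{p}{q}=0$ whenever $p<q$, $p<0$ or $q<0$. *)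

From mathcomp Require Import all_boot all_order all_fingroup.
Set Implicit Arguments. Unset Strict Implicit. Unset Printing Implicit Defensive.

(* Sym_n is {perm 'I_n} : permutations of {0,...,n-1} (a relabelling of [n]). *)

Definition hdist (n : nat) (p q : {perm 'I_n}) : nat := #|[set i | p i != q i]|.

Definition hball (n r : nat) (p : {perm 'I_n}) : {set {perm 'I_n}} :=
  [set q | hdist p q <= r].

(* I(n,d,r): max over pairs at distance exactly d of |B_r(pi) ∩ B_r(tau)|
   (0 if no such pair exists). *)
Definition Ival (n d r : nat) : nat :=
  \max_(pq : {perm 'I_n} * {perm 'I_n} | hdist pq.1 pq.2 == d)
     #|hball r pq.1 :&: hball r pq.2|.

Definition Nval (n d r : nat) : nat :=
  \max_(pq : {perm 'I_n} * {perm 'I_n} | d <= hdist pq.1 pq.2)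
     #|hball r pq.1 :&: hball r pq.2|.

(* If d(p, q) > 2r the two balls are disjoint, so only pairs at distance 2r can
   beat I(n, 2r - 1, r).  Normalise p = 1: a permutation at distance <= r from
   both 1 and q (with d(1, q) = 2r) agrees on every cycle of q either with 1 or
   with q.  If q has a cycle of length >= 3, taking one point out of it gives q'
   with d(1, q') = 2r - 1; otherwise q has two 2-cycles (a b)(c d), and merging
   them into (a b c)(d) does the same.  In both cases a common neighbour s of 1
   and q is sent injectively to a common neighbour of 1 and q' (s itself, or s
   modified on the same cycles), so N(n, 2r - 1, r) = I(n, 2r - 1, r) >= N(n, 2r, r).

   For the lower bound take m = 2t - 3 pairs of positions and a block of
   l = 5 (r = 2t) or l = 7 (r = 2t + 1) positions.  Let Z be the identity and C
   swap every pair and act on the block as the l-cycle, so d(Z, C) = 2m + l = 2r - 1.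
   Swapping t - k pairs and acting on the block by a suitable pattern of
   "defect" k (the identity, the l-cycle, or one of the l cycles obtained by
   closing an arc of the l-cycle) gives common neighbours of Z and C, in number
   'C(m, t) + 'C(m, t - 3) + l ('C(m, t - 1) + 'C(m, t - 2))
   = 2 'C(2t - 3, t) + l 'C(2t - 2, t - 1). *)

From mathcomp Require Import all_boot all_order all_fingroup.
From mathcomp Require Import zify.
Set Implicit Arguments. Unset Strict Implicit. Unset Printing Implicit Defensive.

(** * Hamming distance and balls *)

Lemma card_sum (T : finType) (A : {pred T}) : #|A| = \sum_x (x \in A).
Proof. by rewrite -sum1_card big_mkcond; apply: eq_bigr => x _; case: (x \in A). Qed.

Lemma card_set_sum (T : finType) (P : pred T) : #|[set x | P x]| = \sum_x P x.
Proof. by rewrite card_sum; apply: eq_bigr => x _; rewrite inE. Qed.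

Lemma leq_card_inj_into (T T' : finType) (f : T -> T') (A : {set T}) (B : {set T'}) :
  {in A &, injective f} -> {in A, forall x, f x \in B} -> #|A| <= #|B|.
Proof.
move=> f_inj fAB; rewrite -(card_in_imset f_inj); apply: subset_leq_card.
by apply/subsetP => _ /imsetP [x Ax ->]; exact: fAB.
Qed.

Lemma eqF_sym (T : eqType) (x y : T) : x != y -> (y == x) = false.
Proof. by rewrite eq_sym => /negbTE. Qed.

Section HammingDistance.
Variable n : nat.
Implicit Types p q s g : {perm 'I_n}.

Lemma hdistE p q : hdist p q = \sum_i (p i != q i).
Proof. exact: card_set_sum. Qed.

Lemma hdistC p q : hdist p q = hdist q p.
Proof. by rewrite !hdistE; apply: eq_bigr => i _; rewrite eq_sym. Qed.

Lemma hdist_triangle p q s : hdist p q <= hdist p s + hdist s q.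
Proof.
rewrite !hdistE -big_split /=; apply: leq_sum => i _.
case: (p i =P q i) => // pq; case: (p i =P s i) => [ps|] //.
by rewrite -ps; case: (p i =P q i).
Qed.

Lemma hdist_mulr p q g : hdist (p * g) (q * g) = hdist p q.
Proof. by rewrite !hdistE; apply: eq_bigr => i _; rewrite !permM (inj_eq perm_inj). Qed.

Lemma hdist_local (L : seq 'I_n) p q p' q' : uniq L ->
    (forall i, i \notin L -> p' i = p i /\ q' i = q i) ->
  hdist p' q' + \sum_(i <- L) (p i != q i) = hdist p q + \sum_(i <- L) (p' i != q' i).
Proof.
move=> uL out.
have sumL F : \sum_(i | i \in L) F i = \sum_(i <- L) F i by rewrite big_uniq.
rewrite -!sumL !hdistE !(@bigID _ _ _ _ (index_enum _) (mem L) xpredT) /=.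
have -> : \sum_(i < n | i \notin L) (p' i != q' i) = \sum_(i < n | i \notin L) (p i != q i).
  by apply: eq_bigr => i /out [-> ->].
by rewrite [LHS]addnC [in LHS](addnC (\sum_(i in L) (p' i != q' i))) addnA.
Qed.

Lemma ballI_mulr r p q g :
  #|hball r (p * g) :&: hball r (q * g)| = #|hball r p :&: hball r q|.
Proof.
rewrite -[RHS](card_rcoset _ g); apply: eq_card => s.
by rewrite mem_rcoset !inE -(hdist_mulr p _ g) -(hdist_mulr q _ g) mulgKV.
Qed.

Lemma ballI_far r p q s : hdist p q = 2 * r -> s \in hball r p :&: hball r q ->
  [/\ forall i, (s i == p i) || (s i == q i), hdist p s = r & hdist s q = r].
Proof.
move=> Hpq; rewrite !inE [hdist q s]hdistC => /andP [Hps Hsq].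
have Hsum : \sum_i ((p i != q i) + ((s i != p i) && (s i != q i)))
    <= \sum_i ((p i != s i) + (s i != q i)).
  apply: leq_sum => i _; rewrite [p i == s i]eq_sym.
  case: (s i =P p i) => [->|_] /=; first by rewrite addn0.
  by case: (s i != q i); case: (p i != q i).
move: Hsum; rewrite !big_split /= -!hdistE; set B := \sum_i _ => Hsum.
have /eqP : B = 0 by lia.
rewrite sum_nat_eq0 => /forallP off; split; try lia.
by move=> i; move: (off i); case: (s i == p i); case: (s i == q i).
Qed.

Lemma ballI_far_eq0 r p q : 2 * r < hdist p q -> hball r p :&: hball r q = set0.
Proof.
move=> Hpq; apply/setP => s; rewrite !inE [hdist q s]hdistC.
by apply/negbTE/andP => -[Hps Hsq]; have := hdist_triangle p q s; lia.
Qed.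

Lemma mulr_tperm_out s (u v i : 'I_n) : i != u -> i != v ->
  (s * tperm (s u) (s v))%g i = s i.
Proof. by move=> iu iv; rewrite permM tpermD // (inj_eq perm_inj) eq_sym. Qed.

Lemma mulr_tperm2_out s (u v w i : 'I_n) : i \notin [:: u; v; w] ->
  (s * (tperm (s u) (s v) * tperm (s u) (s w)))%g i = s i.
Proof.
rewrite !inE !negb_or => /and3P [iu iv iw].
by rewrite mulgA (permM (s * _)%g) mulr_tperm_out // tpermD // (inj_eq perm_inj) eq_sym.
Qed.

End HammingDistance.

(** * Pairs at distance 2r *)

Section CentredBalls.
Variables (n r : nat) (q : {perm 'I_n}).
Hypothesis Hq : hdist 1 q = 2 * r.
Implicit Types s : {perm 'I_n}.

Local Notation S := (hball r 1 :&: hball r q).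

Lemma ballI1_mem s : s \in S -> forall i, (s i == i) || (s i == q i).
Proof. by move=> /(ballI_far Hq) [Hs _ _] i; have := Hs i; rewrite perm1. Qed.

(* Equivalently, s agrees on each cycle of q either with 1 or with q. *)
Lemma ballI1_fix s : s \in S -> forall k, (s (q k) == q k) = (s k == k).
Proof.
move=> Hs k; have Hm := ballI1_mem Hs.
have [qkk|qkk] := eqVneq (q k) k; first by rewrite qkk.
apply/idP/idP => /eqP sfix.
  by move: (Hm k); rewrite -sfix (inj_eq perm_inj) [k == _]eq_sym (negbTE qkk) orbF.
set i := (s^-1)%g (q k); have si : s i = q k by rewrite permKV.
move: (Hm i); rewrite si (inj_eq perm_inj) => /orP [/eqP qki|/eqP ki].
  by rewrite {1}qki si.
by move: qkk; rewrite -si -ki sfix eqxx.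
Qed.

Section ShortenCycle.
Variable k : 'I_n.
Hypotheses (qkk : q k != k) (qqkk : q (q k) != k).

(* q' takes q k out of its cycle of q, which has length >= 3, and fixes it. *)
Local Notation g := (tperm (q k) (q (q k))).
Local Notation q' := (q * g)%g.

Let neqE : ((k == q k) = false) * ((k == q (q k)) = false) * ((q k == q (q k)) = false).
Proof. by split; [split|]; rewrite ?(inj_eq perm_inj) ?(eqF_sym qkk) ?(eqF_sym qqkk). Qed.

Lemma shorten_uniq : uniq [:: k; q k].
Proof. by rewrite /= inE neqE. Qed.

Lemma mulr_shorten_out s : s k = q k -> s (q k) = q (q k) ->
  forall i, i \notin [:: k; q k] -> (s * g)%g i = s i.
Proof.
move=> sk sqk i; rewrite !inE negb_or => /andP [ik iqk].
by rewrite -{1}sk -sqk; exact: mulr_tperm_out.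
Qed.

Lemma shorten_hdist : hdist 1 q' = (2 * r).-1.
Proof.
have := hdist_local (p := 1) (q := q) shorten_uniq
  (fun i iL => conj erefl (mulr_shorten_out erefl erefl iL)).
by rewrite !big_cons !big_nil !perm1 !permM tpermL tpermR eqxx !neqE /=; lia.
Qed.

Let F s := if s k == k then s else (s * g)%g.

Lemma shorten_spec s : s \in S -> F s \in hball r 1 :&: hball r q' /\ (F s k == k) = (s k == k).
Proof.
move=> Hs; have [_ s1 sq] := ballI_far Hq Hs; have Hm := ballI1_mem Hs.
rewrite /F !inE [hdist q' _]hdistC; case: ifP => [/eqP sk | skk].
  have sqk : s (q k) = q k by apply/eqP; rewrite ballI1_fix // sk eqxx.
  have := hdist_local (p := s) (q := q) shorten_uniq
    (fun i iL => conj erefl (mulr_shorten_out erefl erefl iL)).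
  rewrite !big_cons !big_nil !permM sk sqk tpermL tpermR eqxx !neqE s1 sq /= => H.
  by rewrite eqxx; split => //; apply/andP; split; lia.
have sk : s k = q k by move: (Hm k); rewrite skk => /eqP.
have sqk : s (q k) = q (q k) by move: (Hm (q k)); rewrite ballI1_fix // skk => /eqP.
have := hdist_local (p := 1) (q := s) shorten_uniq
  (fun i iL => conj erefl (mulr_shorten_out sk sqk iL)).
rewrite !big_cons !big_nil !perm1 !permM sk sqk tpermL tpermR eqxx !neqE s1 /= => H.
by rewrite hdist_mulr sq eq_sym neqE; split => //; apply/andP; split; lia.
Qed.

Lemma ballI1_le_shorten : hdist 1 q' = (2 * r).-1 /\ #|S| <= #|hball r 1 :&: hball r q'|.
Proof.
split; first exact: shorten_hdist.
apply: (leq_card_inj_into (f := F)) => [s1 s2 H1 H2 EF|s Hs]; last by case: (shorten_spec Hs).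
have [_ E1] := shorten_spec H1; have [_ E2] := shorten_spec H2.
have Ek : (s1 k == k) = (s2 k == k) by rewrite -E1 -E2 EF.
by move: EF; rewrite /F Ek; case: ifP => // _; exact: mulIg.
Qed.

End ShortenCycle.

Lemma ballI1_swap s a b : s \in S -> q a = b -> q b = a ->
  (s a = a /\ s b = b) \/ (s a = b /\ s b = a).
Proof.
move=> Hs qa qb; have := ballI1_fix Hs a; rewrite qa => sab.
have [/eqP sa|saa] := boolP (s a == a); first by left; split => //; apply/eqP; rewrite sab sa.
right; move: (Hs) => /ballI1_mem Hm; split.
  by move: (Hm a); rewrite (negbTE saa) qa => /eqP.
by move: (Hm b) saa; rewrite -sab qb => /orP [|/eqP] ->.
Qed.

Section MergeTwoSwaps.
Variables a b c d : 'I_n.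
Hypotheses (qa : q a = b) (qb : q b = a) (qc : q c = d) (qd : q d = c).
Hypotheses (ab : a != b) (ac : a != c) (ad : a != d) (bc : b != c) (bd : b != d) (cd : c != d).

Let neqE := (negbTE ab, negbTE ac, negbTE ad, negbTE bc, negbTE bd, negbTE cd,
  eqF_sym ab, eqF_sym ac, eqF_sym ad, eqF_sym bc, eqF_sym bd, eqF_sym cd).

(* q' replaces the 2-cycles (a b) and (c d) of q by the 3-cycle (a b c) and
   the fixed point d; h2 is the correction for s containing (c d) but not (a b). *)
Local Notation h := (tperm a c * tperm a d)%g.
Local Notation h2 := (tperm b c * tperm b d)%g.
Local Notation q' := (q * h)%g.

Lemma merge_hE : [/\ h a = c, h b = b, h c = d & h d = a].
Proof. by split; rewrite permM !permE /=; do 2 rewrite ?eqxx ?neqE /=. Qed.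

Lemma merge_h2E : [/\ h2 a = a, h2 b = c, h2 c = d & h2 d = b].
Proof. by split; rewrite permM !permE /=; do 2 rewrite ?eqxx ?neqE /=. Qed.

Lemma merge_uniq : uniq [:: a; b; c; d].
Proof. by rewrite /= !inE !negb_or ab ac ad bc bd cd. Qed.

Lemma mulr_merge_out x s : s b = x -> s d = c -> s c = d ->
  forall i, i \notin [:: a; b; c; d] -> (s * (tperm x c * tperm x d))%g i = s i.
Proof.
move=> sb sd sc i; rewrite !inE !negb_or => /and4P [_ ib ic id].
have -> : (tperm x c * tperm x d)%g = (tperm (s b) (s d) * tperm (s b) (s c))%g.
  by rewrite sb sd sc.
by apply: mulr_tperm2_out; rewrite !inE !negb_or ib id ic.
Qed.

Lemma merge_hdist : hdist 1 q' = (2 * r).-1.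
Proof.
have [ha hb hc hd] := merge_hE.
have := hdist_local (p := 1) (q := q) (q' := q') merge_uniq
  (fun i iL => conj erefl (mulr_merge_out qb qd qc iL)).
by rewrite !big_cons !big_nil !perm1 !(permM q) qa qb qc qd ha hb hc hd eqxx ?neqE /=; lia.
Qed.

Let F s := if s c == c then s else if s a == a then (s * h2)%g else (s * h)%g.

Lemma merge_spec s : s \in S ->
  [/\ F s \in hball r 1 :&: hball r q', (F s a == a) = (s a == a) & (F s b == c) = (s c != c)].
Proof.
move=> Hs; have [_ s1 sq] := ballI_far Hq Hs.
have [ha hb hc hd] := merge_hE; have [h2a h2b h2c h2d] := merge_h2E.
have q'_out := mulr_merge_out qb qd qc.
have dist_q' (p' : {perm 'I_n}) (p'_out : forall i, i \notin [:: a; b; c; d] -> p' i = s i) :=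
  hdist_local (p := s) (q := q) (q' := q') merge_uniq (fun i iL => conj (p'_out i iL) (q'_out i iL)).
have dist_1 (p' : {perm 'I_n}) (p'_out : forall i, i \notin [:: a; b; c; d] -> p' i = s i) :=
  hdist_local (p := 1) (q := s) merge_uniq (fun i iL => conj erefl (p'_out i iL)).
rewrite /F !inE [hdist q' _]hdistC.
case: (ballI1_swap Hs qa qb) => [[sa sb]|[sa sb]];
  case: (ballI1_swap Hs qc qd) => [[sc sd]|[sc sd]]; rewrite sa sc ?eqxx ?neqE /=.
- have := dist_q' s (fun _ _ => erefl).
  rewrite !big_cons !big_nil !(permM q) sa sb sc sd qa qb qc qd ha hb hc hd.
  rewrite !eqxx ?neqE /= s1 sq => H.
  by split => //; apply/andP; split; lia.
- have := dist_q' (s * h2)%g (mulr_merge_out sb sd sc).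
  have := dist_1 (s * h2)%g (mulr_merge_out sb sd sc).
  rewrite !big_cons !big_nil !perm1 !(permM q) !(permM s) sa sb sc sd qa qb qc qd.
  rewrite ha hb hc hd h2a h2b h2c h2d !eqxx ?neqE /= s1 sq => H1 H2.
  by split => //; apply/andP; split; lia.
- have := dist_q' s (fun _ _ => erefl).
  rewrite !big_cons !big_nil !(permM q) sa sb sc sd qa qb qc qd ha hb hc hd.
  rewrite !eqxx ?neqE /= s1 sq => H.
  by split => //; apply/andP; split; lia.
- have := dist_1 (s * h)%g (mulr_merge_out sb sd sc).
  rewrite !big_cons !big_nil !perm1 !(permM s) sa sb sc sd ha hb hc hd.
  rewrite !eqxx ?neqE /= s1 hdist_mulr sq => H.
  by split => //; apply/andP; split; lia.
Qed.

Lemma ballI1_le_merge : hdist 1 q' = (2 * r).-1 /\ #|S| <= #|hball r 1 :&: hball r q'|.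
Proof.
split; first exact: merge_hdist.
apply: (leq_card_inj_into (f := F)) => [s1 s2 H1 H2 EF|s Hs]; last by case: (merge_spec Hs).
have [_ A1 B1] := merge_spec H1; have [_ A2 B2] := merge_spec H2.
have Ea : (s1 a == a) = (s2 a == a) by rewrite -A1 -A2 EF.
have Ec : (s1 c == c) = (s2 c == c) by apply: negb_inj; rewrite -B1 -B2 EF.
by move: EF; rewrite /F Ea Ec; do 2 case: ifP => // _; exact: mulIg.
Qed.

End MergeTwoSwaps.

End CentredBalls.

Lemma ballI_le_Ival n d r (p q : {perm 'I_n}) :
  hdist p q = d -> #|hball r p :&: hball r q| <= Ival n d r.
Proof. by move=> Hpq; apply: (@leq_bigmax_cond _ _ _ (p, q)); rewrite /= Hpq. Qed.

Lemma Ival_le_Nval n d r : Ival n d r <= Nval n d r.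
Proof.
apply/bigmax_leqP => -[p q] /= /eqP Hpq.
by apply: (@leq_bigmax_cond _ _ _ (p, q)); rewrite /= Hpq.
Qed.

Lemma ballI1_le_Ival_pred n r (q : {perm 'I_n}) : 2 <= r -> hdist 1 q = 2 * r ->
  #|hball r 1 :&: hball r q| <= Ival n (2 * r - 1) r.
Proof.
move=> r2 Hq.
have toI (q' : {perm 'I_n}) : hdist 1 q' = (2 * r).-1 -> #|hball r 1 :&: hball r q'| <= Ival n (2 * r - 1) r.
  by move=> Hq'; apply: ballI_le_Ival; rewrite Hq' subn1.
case: (boolP [exists k, (q k != k) && (q (q k) != k)]) => [/existsP [k /andP [qkk qqkk]]|].
  by have [/toI HI Hle] := ballI1_le_shorten Hq qkk qqkk; exact: leq_trans Hle HI.
rewrite negb_exists => /forallP swaps.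
have qqE k : q k != k -> q (q k) = k by move=> qkk; move: (swaps k); rewrite qkk => /negPn/eqP.
set D := [set i | (1%g : {perm 'I_n}) i != q i].
have : 0 < #|D| by rewrite -/(hdist 1 q) Hq; lia.
case/card_gt0P => a; rewrite inE perm1 => ab.
have : 0 < #|D :\: [set a; q a]|.
  rewrite cardsD -/(hdist 1 q) Hq; have := subset_leq_card (subsetIr D [set a; q a]).
  by rewrite cards2; case: (_ != _); lia.
case/card_gt0P => c; rewrite !inE perm1 negb_or => /andP [/andP [ca cb] cd].
have ac : a != c by rewrite eq_sym.
have bc : q a != c by rewrite eq_sym.
have ad : a != q c by apply: contra cb => /eqP ->; rewrite qqE // eq_sym.
have bd : q a != q c by rewrite (inj_eq perm_inj).
have qqa : q (q a) = a by rewrite qqE // eq_sym.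
have qqc : q (q c) = c by rewrite qqE // eq_sym.
have [/toI HI Hle] := ballI1_le_merge Hq erefl qqa erefl qqc ab ac ad bc bd cd.
exact: leq_trans Hle HI.
Qed.

Lemma Nval_le_Ival n r k : 2 <= r -> 2 * r - 1 <= k -> Nval n k r <= Ival n (2 * r - 1) r.
Proof.
move=> r2 rk; apply/bigmax_leqP => -[p q] /= Hpq.
case: (ltngtP (hdist p q) (2 * r)) => H.
- by apply: ballI_le_Ival; lia.
- by rewrite ballI_far_eq0 ?cards0.
rewrite -(ballI_mulr r p q p^-1) mulgV; apply: ballI1_le_Ival_pred => //.
by rewrite -(mulgV p) hdist_mulr.
Qed.

(** * A lower bound for I(n, 2r - 1, r) *)

Section PermOfFun.
Variable n : nat.

Definition fun_ord (f : nat -> nat) (i : 'I_n) : 'I_n := insubd i (f i).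

Definition fun_ord_perm (f : nat -> nat) : 'I_n -> 'I_n :=
  if injectiveb (fun_ord f) then fun_ord f else id.

Lemma fun_ord_perm_inj f : injective (fun_ord_perm f).
Proof. by rewrite /fun_ord_perm; case: (injectiveP (fun_ord f)) => // _ x y. Qed.

(* Meaningful only when f restricts to a bijection of [0, n) (perm_of_funE);
   otherwise it is a junk permutation. *)
Definition perm_of_fun f : {perm 'I_n} := perm (@fun_ord_perm_inj f).

Lemma perm_of_funE f : injective f -> (forall i, i < n -> f i < n) ->
  forall i : 'I_n, val (perm_of_fun f i) = f i.
Proof.
move=> f_inj f_lt.
have fE (i : 'I_n) : val (fun_ord f i) = f i by rewrite /fun_ord insubdK //; exact: f_lt.
have : injective (fun_ord f) by move=> i j /(congr1 val); rewrite !fE => /f_inj/val_inj.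
by move=> /injectiveP fo_inj i; rewrite permE /fun_ord_perm fo_inj.
Qed.

Lemma hdist_perm_of_fun f g : injective f -> injective g ->
    (forall i, i < n -> f i < n) -> (forall i, i < n -> g i < n) ->
  hdist (perm_of_fun f) (perm_of_fun g) = \sum_(0 <= i < n) (f i != g i).
Proof.
move=> f_inj g_inj f_lt g_lt; rewrite hdistE big_mkord; apply: eq_bigr => i _.
by rewrite -val_eqE !perm_of_funE.
Qed.

End PermOfFun.

Section SwapHalves.
Variable m : nat.
Implicit Types a b : nat -> bool.

Definition swap_halves a i :=
  if i < m then (if a i then i + m else i)
  else if i < 2 * m then (if a (i - m) then i - m else i) else i.

Lemma swap_halvesK a : involutive (swap_halves a).
Proof.
move=> i; rewrite /swap_halves.
have [im|mi] := ltnP i m.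
  case ai: (a i); last by rewrite im ai.
  have -> : (i + m < m) = false by lia.
  have -> : (i + m < 2 * m) = true by lia.
  by rewrite addnK ai.
have [i2m|i2m] := ltnP i (2 * m); last by rewrite ltnNge mi /= ltnNge i2m.
case ai: (a (i - m)); last by rewrite ltnNge mi /= i2m ai.
have -> : (i - m < m) = true by lia.
by rewrite ai subnK.
Qed.

Lemma swap_halves_id a i : 2 * m <= i -> swap_halves a i = i.
Proof.
move=> mi; rewrite /swap_halves.
have -> : (i < m) = false by lia.
by have -> : (i < 2 * m) = false by lia.
Qed.

Lemma swap_halves_lt a i : i < 2 * m -> swap_halves a i < 2 * m.
Proof.
move=> i2m; rewrite /swap_halves i2m.
by case: ifP => im; [case: (a i) | case: (a (i - m))]; lia.
Qed.

Lemma sum_swap_halves a b :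
  \sum_(0 <= i < 2 * m) (swap_halves a i != swap_halves b i) = 2 * \sum_(0 <= k < m) (a k != b k).
Proof.
rewrite (@big_cat_nat _ _ _ m) //=; last by lia.
rewrite (big_addn 0 (2 * m) m) (_ : 2 * m - m = m); last by lia.
rewrite mul2n -addnn; congr (_ + _); apply: eq_big_nat => i /andP [_ im].
  rewrite /swap_halves im; case: (a i); case: (b i) => /=; lia.
rewrite /swap_halves.
have -> : (i + m < m) = false by lia.
have -> : (i + m < 2 * m) = true by lia.
rewrite addnK; case: (a i); case: (b i) => /=; lia.
Qed.

End SwapHalves.

Section Blocks.
Variables (o : nat) (P : seq nat).
Hypothesis HP : perm_eq P (iota 0 (size P)).

Definition block i := if o <= i < o + size P then o + nth 0 P (i - o) else i.

Lemma nth_perm_iota_lt x : x < size P -> nth 0 P x < size P.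
Proof. by move=> xP; have := mem_nth 0 xP; rewrite (perm_mem HP) mem_iota. Qed.

Lemma block_in i : o <= i < o + size P -> o <= block i < o + size P.
Proof.
move=> iP; rewrite /block iP leq_addr ltn_add2l nth_perm_iota_lt //; lia.
Qed.

Lemma block_out i : ~~ (o <= i < o + size P) -> block i = i.
Proof. by move=> /negbTE iP; rewrite /block iP. Qed.

Lemma block_inj : injective block.
Proof.
have uP : uniq P by rewrite (perm_uniq HP) iota_uniq.
move=> i j; case: (boolP (o <= i < o + size P)) => iP; case: (boolP (o <= j < o + size P)) => jP.
- rewrite /block iP jP => /addnI /eqP.
  move: iP jP => /andP [oi io] /andP [oj jo].
  have ioP : i - o < size P by lia.
  have joP : j - o < size P by lia.
  by rewrite nth_uniq // => /eqP; lia.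
- by rewrite (block_out jP) => Eij; move: jP (block_in iP); rewrite Eij => /negP.
- by rewrite (block_out iP) => Eij; move: iP (block_in jP); rewrite -Eij => /negP.
- by rewrite (block_out iP) (block_out jP).
Qed.

End Blocks.

Definition seq_hdist (P Q : seq nat) := count (fun i => nth 0 P i != nth 0 Q i) (iota 0 (size P)).

Lemma sum_block o P Q : size Q = size P ->
  \sum_(o <= i < o + size P) (block o P i != block o Q i) = seq_hdist P Q.
Proof.
move=> sQ; rewrite (big_addn 0 _ o) addKn /seq_hdist -sum1_count [RHS]big_mkcond.
rewrite /index_iota subn0; apply: eq_big_seq => i; rewrite mem_iota /= => iP.
rewrite /block sQ leq_addl [i + o]addnC ltn_add2l iP addKn eqn_add2l.
by case: (_ != _).
Qed.

(* Positions k and k + m (k < m) are swapped when a k holds, positions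
   2m, ..., 2m + size P - 1 carry the pattern P, and the rest is fixed. *)
Definition config m a P i := swap_halves m a (block (2 * m) P i).

Section Configurations.
Variables (n m : nat).
Implicit Types (a b : nat -> bool) (P Q : seq nat).

Lemma config_inj a P : perm_eq P (iota 0 (size P)) -> injective (config m a P).
Proof. by move=> HP; exact: inj_comp (can_inj (swap_halvesK m a)) (block_inj HP). Qed.

Lemma config_lt a P i : perm_eq P (iota 0 (size P)) -> 2 * m + size P <= n -> i < n ->
  config m a P i < n.
Proof.
move=> HP Pn i_n; rewrite /config.
have [i2m|mi] := ltnP i (2 * m).
  rewrite block_out; last by rewrite negb_and -ltnNge i2m.
  by have := swap_halves_lt a i2m; lia.
have [iP|iP] := boolP (2 * m <= i < 2 * m + size P).
  by case/andP: (block_in HP iP) => lo hi; rewrite swap_halves_id //; lia.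
by rewrite block_out // swap_halves_id.
Qed.

Lemma config_low a P k : k < m -> config m a P k = if a k then k + m else k.
Proof.
move=> km; rewrite /config block_out; last by rewrite negb_and -ltnNge; apply/orP; left; lia.
by rewrite /swap_halves km.
Qed.

Lemma config_block a P x : x < size P -> config m a P (2 * m + x) = 2 * m + nth 0 P x.
Proof.
move=> xP; rewrite /config /block leq_addr ltn_add2l xP addKn.
by rewrite swap_halves_id // leq_addr.
Qed.

Lemma hdist_config a b P Q :
    perm_eq P (iota 0 (size P)) -> perm_eq Q (iota 0 (size Q)) -> size Q = size P ->
    2 * m + size P <= n ->
  hdist (perm_of_fun n (config m a P)) (perm_of_fun n (config m b Q)) =
  2 * \sum_(0 <= k < m) (a k != b k) + seq_hdist P Q.
Proof.
move=> HP HQ sQ Pn.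
rewrite hdist_perm_of_fun; try exact: config_inj; last 2 first.
- by move=> i; exact: config_lt.
- by move=> i; apply: config_lt; rewrite // sQ.
have m_n : 2 * m <= n by lia.
rewrite (big_cat_nat (leq0n (2 * m)) m_n) (big_cat_nat (leq_addr (size P) (2 * m)) Pn) /= addnA.
rewrite [X in _ + X]big_nat_cond [X in _ + X]big1 ?addn0; last first.
  move=> i /andP [/andP [Pi _] _].
  by rewrite /config !block_out ?swap_halves_id ?eqxx // ?sQ; try lia; rewrite negb_and -leqNgt Pi orbT.
rewrite -(sum_swap_halves m a b) -(sum_block (2 * m) sQ).
congr (_ + _); apply: eq_big_nat => i.
  by move=> i2m; rewrite /config !block_out // ?sQ; apply/negP; lia.
move=> iP; have iQ : 2 * m <= i < 2 * m + size Q by rewrite sQ.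
case/andP: (block_in HP iP) => lP _; case/andP: (block_in HQ iQ) => lQ _.
by rewrite /config !swap_halves_id.
Qed.

Lemma config_perm_inj a b P Q :
    perm_eq P (iota 0 (size P)) -> perm_eq Q (iota 0 (size Q)) -> size Q = size P ->
    2 * m + size P <= n ->
    perm_of_fun n (config m a P) = perm_of_fun n (config m b Q) ->
  (forall k, k < m -> a k = b k) /\ P = Q.
Proof.
move=> HP HQ sQ Pn E.
have Ei i : i < n -> config m a P i = config m b Q i.
  move=> i_n; have := congr1 (fun p : {perm 'I_n} => val (p (Ordinal i_n))) E => /=.
  rewrite !perm_of_funE //; try exact: config_inj.
  - by move=> j; apply: config_lt; rewrite // sQ.
  - by move=> j; exact: config_lt.
split=> [k km|].
  have k_n : k < n by lia.
  have := Ei k k_n; rewrite !config_low //.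
  by case: (a k); case: (b k) => //; lia.
apply: (@eq_from_nth _ 0) => [|x xP]; first by rewrite sQ.
have x_n : 2 * m + x < n by apply: leq_trans Pn; rewrite ltn_add2l.
have := Ei _ x_n.
by rewrite !config_block ?sQ // => /addnI.
Qed.

End Configurations.

Lemma card_sets_add (T : finType) k t :
  #|[set A : {set T} | #|A| + k == t]| = if k <= t then 'C(#|T|, t - k) else 0.
Proof.
have [kt|tk] := leqP k t.
  by rewrite -card_draws; apply: eq_card => A; rewrite !inE; apply/eqP/eqP; lia.
by apply: eq_card0 => A; rewrite !inE; apply/eqP; lia.
Qed.

Lemma card_pairs_nth m t (pats : seq (seq nat * nat)) :
  #|[set x : {set 'I_m} * 'I_(size pats) | #|x.1| + (nth ([::], 0) pats x.2).2 == t]| =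
  \sum_(x <- pats) (if x.2 <= t then 'C(m, t - x.2) else 0).
Proof.
transitivity (\sum_(A : {set 'I_m}) \sum_(j < size pats) (#|A| + (nth ([::], 0) pats j).2 == t : nat)).
  by rewrite card_set_sum pair_bigA.
rewrite exchange_big (big_nth ([::], 0)) big_mkord; apply: eq_bigr => j _.
by rewrite -card_set_sum card_sets_add card_ord.
Qed.

Definition setb m (A : {set 'I_m}) k := k \in [seq val x | x <- enum A].

Lemma setb_val m (A : {set 'I_m}) (x : 'I_m) : setb A x = (x \in A).
Proof. by rewrite /setb (mem_map val_inj) mem_enum. Qed.

Lemma sum_neq_setb m (c : bool) (A : {set 'I_m}) :
  \sum_(0 <= k < m) (c != setb A k) = if c then m - #|A| else #|A|.
Proof.
have cardA : \sum_(0 <= k < m) setb A k = #|A|.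
  rewrite big_mkord card_sum; apply: eq_bigr => x _; by rewrite setb_val.
have sum_m : #|A| + \sum_(0 <= k < m) (true != setb A k) = m.
  rewrite -cardA -big_split /= (eq_bigr (fun _ => 1)) => [|k _]; last by case: setb.
  by rewrite sum_nat_const_nat subn0 muln1.
case: c; first lia.
by rewrite -cardA; apply: eq_bigr => k _; case: setb.
Qed.

(* Closes the arc s, s + 1, ..., s + j - 1 (mod l) of the l-cycle i |-> i + 1
   into a j-cycle; arc_cycle l 1 s is the identity, arc_cycle l l 0 the l-cycle. *)
Definition arc_cycle l j s :=
  [seq let d := (i + l - s) %% l in
       if d < j.-1 then i.+1 %% l else if d == j.-1 then s else i | i <- iota 0 l].

Definition arc_patterns l j1 j2 : seq (seq nat * nat) :=
  [:: (arc_cycle l 1 0, 0), (arc_cycle l l 0, 3) &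
      [seq (arc_cycle l j1 s, 1) | s <- iota 0 l] ++ [seq (arc_cycle l j2 s, 2) | s <- iota 0 l]].

(* A pattern (P, k) of defect k, combined with t - k of the 2t - 3 pair swaps,
   lies within 2t + e of both Z (no swaps, identity block) and C (all swaps,
   block C0); see defect_dist_bounds. *)
Definition pattern_ok l e C0 (x : seq nat * nat) :=
  [&& perm_eq x.1 (iota 0 l), seq_hdist (iota 0 l) x.1 <= 2 * x.2 + e
    & seq_hdist C0 x.1 + 2 * x.2 <= 6 + e].

Definition patterns_ok l e C0 pats :=
  [&& perm_eq C0 (iota 0 l), seq_hdist (iota 0 l) C0 == l, uniq (map fst pats)
    & all (pattern_ok l e C0) pats].

Lemma arc_patterns5_ok : patterns_ok 5 0 (arc_cycle 5 5 0) (arc_patterns 5 2 4).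
Proof. by vm_compute. Qed.

Lemma arc_patterns7_ok : patterns_ok 7 1 (arc_cycle 7 7 0) (arc_patterns 7 3 5).
Proof. by vm_compute. Qed.

Lemma defect_dist_bounds t e a k d1 d2 :
    2 <= t -> a + k = t -> a <= 2 * t - 3 -> d1 <= 2 * k + e -> d2 + 2 * k <= 6 + e ->
  (2 * a + d1 <= 2 * t + e) && (2 * (2 * t - 3 - a) + d2 <= 2 * t + e).
Proof. by move=> *; apply/andP; split; lia. Qed.

Definition defect_weight t k := if k <= t then 'C(2 * t - 3, t - k) else 0.

Lemma Ival_ge_patterns n t l e C0 pats : 2 <= t -> 2 * (2 * t - 3) + l <= n ->
    patterns_ok l e C0 pats ->
  \sum_(x <- pats) defect_weight t x.2 <= Ival n (2 * (2 * t - 3) + l) (2 * t + e).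
Proof.
move=> t2 ln /and4P [HC0 /eqP dC0 upats /allP pats_ok]; set m := 2 * t - 3.
have sC0 : size C0 = l by rewrite (perm_size HC0) size_iota.
pose pj (j : 'I_(size pats)) := nth ([::], 0) pats j.
have pj_ok j : pattern_ok l e C0 (pj j) by apply: pats_ok; rewrite mem_nth.
have pj_perm j : perm_eq (pj j).1 (iota 0 l) by case/and3P: (pj_ok j).
have spj j : size (pj j).1 = l by rewrite (perm_size (pj_perm j)) size_iota.
have pj_perm_size j : perm_eq (pj j).1 (iota 0 (size (pj j).1)) by rewrite spj.
have pjn j : 2 * m + size (pj j).1 <= n by rewrite spj.
set Z := perm_of_fun n (config m (fun _ => false) (iota 0 l)).
set C := perm_of_fun n (config m (fun _ => true) C0).
have ZC : hdist Z C = 2 * m + l.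
  rewrite hdist_config ?sC0 ?size_iota ?dC0 // (eq_bigr (fun _ => 1)) //.
  by rewrite sum_nat_const_nat subn0 muln1.
apply: leq_trans (ballI_le_Ival _ ZC).
pose G (x : {set 'I_m} * 'I_(size pats)) := perm_of_fun n (config m (setb x.1) (pj x.2).1).
rewrite /defect_weight -card_pairs_nth.
apply: (leq_card_inj_into (f := G)) => [[A j] [B k] _ _ /= EG | [A j]].
  have [|Eab EP] := config_perm_inj (pj_perm_size j) (pj_perm_size k) _ (pjn j) EG; first by rewrite !spj.
  have -> : A = B by apply/setP => x; rewrite -!setb_val Eab.
  have -> // : j = k.
  apply/val_inj/eqP; rewrite -(nth_uniq [::] _ _ upats) ?size_map ?ltn_ord //.
  by rewrite !(nth_map ([::], 0)) ?ltn_ord //; apply/eqP; exact: EP.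
move=> /[!inE] /= /eqP; rewrite -/(pj j) => HA; case/and3P: (pj_ok j) => _ d1 d2.
have HAm : #|A| <= m by rewrite -[X in _ <= X]card_ord max_card.
rewrite !hdist_config ?spj ?size_iota ?sC0 // !sum_neq_setb /=.
exact: defect_dist_bounds t2 HA HAm d1 d2.
Qed.

Lemma sum_arc_patterns t l j1 j2 :
  \sum_(x <- arc_patterns l j1 j2) defect_weight t x.2 =
  defect_weight t 0 + defect_weight t 3 + l * (defect_weight t 1 + defect_weight t 2).
Proof.
rewrite !big_cons big_cat !big_map /= !big_const_seq !count_predT size_iota !iter_addn_0.
by rewrite addnA mulnDr [l * _]mulnC [l * defect_weight t 2]mulnC.
Qed.

Lemma defect_weight_pairs t : 2 <= t ->
  defect_weight t 0 + defect_weight t 3 = 2 * 'C(2 * t - 3, t) /\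
  defect_weight t 1 + defect_weight t 2 = 'C(2 * t - 2, t - 1).
Proof.
move=> t2; have t1 : 1 <= t by lia.
rewrite /defect_weight leq0n t1 t2 subn0; split.
  have [t3|t3] := leqP 3 t; last by rewrite bin_small; lia.
  rewrite -[in 'C(_, t - 3)]bin_sub; last by lia.
  by rewrite (_ : 2 * t - 3 - (t - 3) = t); lia.
have -> : 2 * t - 2 = (2 * t - 3).+1 by lia.
have -> : t - 1 = (t - 2).+1 by lia.
by rewrite binS addnC.
Qed.

Lemma Ival_lower_bound n t r : 2 <= t -> r = 2 * t \/ r = 2 * t + 1 -> 2 * r - 1 <= n ->
  2 * 'C(2 * t - 3, t) + (if r == 2 * t then 5 else 7) * 'C(2 * t - 2, t - 1) <=
  Ival n (2 * r - 1) r.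
Proof.
move=> t2 [->|->] rn; have [<- <-] := defect_weight_pairs t2.
- rewrite eqxx -(sum_arc_patterns t 5 2 4) -[X in Ival _ _ X]addn0.
  rewrite (_ : 2 * (2 * t) - 1 = 2 * (2 * t - 3) + 5); last lia.
  by apply: Ival_ge_patterns arc_patterns5_ok => //; lia.
- rewrite (_ : (2 * t + 1 == 2 * t) = false); last lia.
  rewrite -(sum_arc_patterns t 7 3 5).
  rewrite (_ : 2 * (2 * t + 1) - 1 = 2 * (2 * t - 3) + 7); last lia.
  by apply: Ival_ge_patterns arc_patterns7_ok => //; lia.
Qed.

Theorem theorem2 (t r : nat) :
  2 <= t -> (r = 2 * t \/ r = 2 * t + 1) ->
  let ell := if r == 2 * t then 5 else 7 in
  (forall n, 2 * r - 1 <= n ->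
     2 * 'C(2 * t - 3, t) + ell * 'C(2 * t - 2, t - 1) <= Ival n (2 * r - 1) r) /\
  (forall n, 2 * r <= n ->
     [/\ Nval n (2 * r - 1) r = Ival n (2 * r - 1) r,
         Nval n (2 * r) r <= Ival n (2 * r - 1) r &
         2 * 'C(2 * t - 3, t) + ell * 'C(2 * t - 2, t - 1) <= Nval n (2 * r - 1) r]).
Proof.
move=> t2 Hr ell; have r2 : 2 <= r by case: Hr; lia.
split=> [n rn | n rn]; first exact: Ival_lower_bound.
have NI : Nval n (2 * r - 1) r = Ival n (2 * r - 1) r.
  by apply/eqP; rewrite eqn_leq Nval_le_Ival ?Ival_le_Nval.
rewrite NI; split=> //; first by apply: Nval_le_Ival => //; lia.
apply: Ival_lower_bound => //; lia.
Qed.
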